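(* Let $C>0$ and let $(p_N)_{N\in\mathbb{N}}$, $p_N(x)=\prod_{i=1}^N(x-z_i)$, be monic complex polynomials of degree $N$ with $\mu_{\rm norm}(p_N)\le C\sqrt{N}$ for all $N$. Then, as $N\to\infty$, $$\prod_{i=1}^N\|x-z_i\|\ge\frac{e^{C_{\log}+o(1)}}{2C}\sqrt{\frac{e^N}{N}}\,\Big\|\prod_{i=1}^N(x-z_i)\Big\|,$$ where $\|\cdot\|$ is the Bombieri–Weyl norm.
   Context: Bombieri–Weyl norm $\|\sum_{i=0}^N a_iz^i\|=(\sum_i\binom{N}{i}^{-1}|a_i|^2)^{1/2}$; $\mu_{\rm norm}(P,z)=N^{1/2}\|P\|(1+|z|^2)^{N/2-1}/|P'(z)|$ for a root $z$ of $P$ ($\infty$ at multiple roots), $\mu_{\rm norm}(P)=\max_{P(z)=0}\mu_{\rm norm}(P,z)$. $C_{\log}$ is the constant (known to exist) with $\min_{\mu_N\subset\mathbb{S}^2}\mathcal{E}_{\log}(\mu_N)=\kappa N^2-\tfrac12N\log N+C_{\log}N+o(N)$, where the minimum is over $N$-point subsets of the unit sphere $\mathbb{S}^2$, $\mathcal{E}_{\log}(\{x_1,\dots,x_N\})=-\sum_{i\ne j}\log\|x_i-x_j\|$ and $\kappa=\tfrac12-\log2$. *)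

From Stdlib Require Import Reals List.
Import ListNotations.
Open Scope R_scope.

Definition Cx := (R * R)%type.
Definition C0 : Cx := (0, 0).
Definition C1 : Cx := (1, 0).
Definition Cadd (a b : Cx) : Cx := (fst a + fst b, snd a + snd b).
Definition Cmul (a b : Cx) : Cx :=
  (fst a * fst b - snd a * snd b, fst a * snd b + snd a * fst b).
Definition Copp (a : Cx) : Cx := (- fst a, - snd a).
Definition Cnorm2 (a : Cx) : R := fst a * fst a + snd a * snd a.
Definition Cmod (a : Cx) : R := sqrt (Cnorm2 a).
Definition Cofnat (n : nat) : Cx := (INR n, 0).

(** Polynomials: coefficient lists, constant term first. *)
Fixpoint padd (p q : list Cx) : list Cx :=
  match p, q with
  | [], _ => q
  | _, [] => p
  | a :: p', b :: q' => Cadd a b :: padd p' q'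
  end.

Definition mul_lin (z : Cx) (p : list Cx) : list Cx :=
  padd (C0 :: p) (map (Cmul (Copp z)) p).

Definition poly_of_roots (l : list Cx) : list Cx :=
  fold_right mul_lin [C1] l.

Definition lin_poly (z : Cx) : list Cx := [Copp z; C1].

Definition peval (p : list Cx) (x : Cx) : Cx :=
  fold_right (fun a acc => Cadd a (Cmul x acc)) C0 p.

Fixpoint pderiv_aux (k : nat) (p : list Cx) : list Cx :=
  match p with
  | [] => []
  | a :: p' => Cmul (Cofnat k) a :: pderiv_aux (S k) p'
  end.
Definition pderiv (p : list Cx) : list Cx := pderiv_aux 1 (tl p).

(** degree of a coefficient list (the lists we use have nonzero leading coefficient) *)
Definition pdeg (p : list Cx) : nat := pred (length p).

(** Bombieri–Weyl norm: (sum_i C(N,i)^{-1} |a_i|^2)^{1/2}, N = degree *)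
Fixpoint bw_sum (N i : nat) (p : list Cx) : R :=
  match p with
  | [] => 0
  | a :: p' => Cnorm2 a / Binomial.C N i + bw_sum N (S i) p'
  end.
Definition bw_norm (p : list Cx) : R := sqrt (bw_sum (pdeg p) 0 p).

(** mu_norm(P,z) for a root z with P'(z) <> 0 *)
Definition mu_norm_at (P : list Cx) (z : Cx) : R :=
  sqrt (INR (pdeg P)) * bw_norm P
  * Rpower (1 + Cnorm2 z) (INR (pdeg P) / 2 - 1)
  / Cmod (peval (pderiv P) z).

(** mu_norm(P) <= b : every root is simple (mu = +infinity at multiple roots)
    and mu_norm(P,z) <= b for every root z. *)
Definition mu_norm_le (P : list Cx) (b : R) : Prop :=
  forall z : Cx, peval P z = C0 ->
    peval (pderiv P) z <> C0 /\ mu_norm_at P z <= b.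

Definition R3 := (R * R * R)%type.
Definition dist3 (x y : R3) : R :=
  let '(a, b, c) := x in let '(a', b', c') := y in
  sqrt ((a - a') ^ 2 + (b - b') ^ 2 + (c - c') ^ 2).
Definition on_sphere (x : R3) : Prop :=
  let '(a, b, c) := x in a ^ 2 + b ^ 2 + c ^ 2 = 1.
Definition R3_0 : R3 := (0, 0, 0).

Fixpoint sumR (n : nat) (f : nat -> R) : R :=
  match n with
  | O => 0
  | S m => sumR m f + f m
  end.

Definition log_energy (l : list R3) : R :=
  sumR (length l) (fun i => sumR (length l) (fun j =>
    if Nat.eqb i j then 0
    else - ln (dist3 (nth i l R3_0) (nth j l R3_0)))).

(** N-point subsets of S^2, listed without repetition *)
Definition sphere_config (N : nat) (l : list R3) : Prop :=
  length l = N /\ NoDup l /\ Forall on_sphere l.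

Definition kappa : R := 1 / 2 - ln 2.

Definition energy_main (c : R) (N : nat) : R :=
  kappa * INR N ^ 2 - 1 / 2 * INR N * ln (INR N) + c * INR N.

(** c = C_log :  min_{N-point subsets} E_log = kappa N^2 - 1/2 N log N + c N + o(N) *)
Definition is_Clog (c : R) : Prop :=
  forall eps : R, eps > 0 -> exists N0 : nat, forall N : nat, (N >= N0)%nat ->
    (exists l, sphere_config N l /\ log_energy l <= energy_main c N + eps * INR N)
    /\ (forall l, sphere_config N l -> log_energy l >= energy_main c N - eps * INR N).

Definition prodR (l : list R) : R := fold_right Rmult 1 l.

From Stdlib Require Import Reals List Lia Lra FinFun.
Import ListNotations.
Open Scope R_scope.

(* Send the roots z_i to the sphere by inverse stereographic projection.  The
   chordal distance there is 2|z_i - z_j| / sqrt((1+|z_i|^2)(1+|z_j|^2)), so the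
   i-th row -sum_{j<>i} log||x_i - x_j|| of the energy equals
     -(N-1) log 2 - log|p'(z_i)| + (N/2 - 1) log(1+|z_i|^2) + 1/2 sum_j log(1+|z_j|^2),
   since prod_{j<>i} (z_i - z_j) = p'(z_i).  The condition on mu_norm(p, z_i) bounds
   log|p'(z_i)| from below by log||p|| - log C + (N/2 - 1) log(1+|z_i|^2), hence
   E_log <= N (-(N-1) log 2 + log C - log||p|| + log prod_j ||x - z_j||), because
   ||x - z||^2 = 1 + |z|^2.  Comparing with the minimal energy
   kappa N^2 - 1/2 N log N + (C_log - eps) N gives the claim. *)

Ltac cx_ring :=
  repeat match goal with |- context [peval ?p ?x] =>
    let e := fresh "e" in set (e := peval p x) in *; clearbody e end;
  repeat match goal with c : Cx |- _ => destruct c end;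
  unfold Cadd, Cmul, Copp, C0, C1, Cnorm2, Cofnat in *; simpl in *;
  first [ring | f_equal; ring].

Lemma peval_cons a p x : peval (a :: p) x = Cadd a (Cmul x (peval p x)).
Proof. reflexivity. Qed.

Lemma peval_padd p q x : peval (padd p q) x = Cadd (peval p x) (peval q x).
Proof.
  revert q; induction p as [|a p IH]; intros [|b q]; simpl; try rewrite IH; cx_ring.
Qed.

Lemma peval_map_Cmul c p x : peval (map (Cmul c) p) x = Cmul c (peval p x).
Proof. induction p as [|a p IH]; simpl; [|rewrite IH]; cx_ring. Qed.

Lemma peval_mul_lin z p x :
  peval (mul_lin z p) x = Cmul (Cadd x (Copp z)) (peval p x).
Proof. unfold mul_lin. rewrite peval_padd, peval_map_Cmul. simpl. cx_ring. Qed.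

Lemma peval_pderiv_aux_padd k p q x : peval (pderiv_aux k (padd p q)) x =
  Cadd (peval (pderiv_aux k p) x) (peval (pderiv_aux k q) x).
Proof.
  revert k q; induction p as [|a p IH]; intros k [|b q]; simpl; try rewrite IH; cx_ring.
Qed.

Lemma peval_pderiv_aux_map_Cmul k c p x :
  peval (pderiv_aux k (map (Cmul c) p)) x = Cmul c (peval (pderiv_aux k p) x).
Proof.
  revert k; induction p as [|a p IH]; intros k; simpl; [|rewrite IH]; cx_ring.
Qed.

Lemma peval_pderiv_aux_S k p x :
  peval (pderiv_aux (S k) p) x = Cadd (peval (pderiv_aux k p) x) (peval p x).
Proof.
  revert k; induction p as [|b p IH]; intros k; [simpl; cx_ring|].
  cbn [pderiv_aux]; rewrite !peval_cons, IH. unfold Cofnat; rewrite S_INR. cx_ring.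
Qed.

Lemma peval_pderiv_mul_lin z p x :
  peval (pderiv (mul_lin z p)) x =
  Cadd (peval p x) (Cmul (Cadd x (Copp z)) (peval (pderiv p) x)).
Proof.
  destruct p as [|a p]; [unfold mul_lin, pderiv; simpl; cx_ring|].
  change (pderiv (mul_lin z (a :: p)))
    with (pderiv_aux 1 (padd (a :: p) (map (Cmul (Copp z)) p))).
  change (pderiv (a :: p)) with (pderiv_aux 1 p).
  rewrite peval_pderiv_aux_padd, peval_pderiv_aux_map_Cmul.
  simpl pderiv_aux. simpl peval. rewrite peval_pderiv_aux_S. cx_ring.
Qed.

Lemma Cnorm2_mul a b : Cnorm2 (Cmul a b) = Cnorm2 a * Cnorm2 b.
Proof. destruct a, b; unfold Cnorm2, Cmul; simpl; ring. Qed.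

Lemma Cnorm2_ge0 a : 0 <= Cnorm2 a.
Proof. destruct a; unfold Cnorm2; simpl; nra. Qed.

Lemma Cnorm2_eq0 a : Cnorm2 a = 0 -> a = C0.
Proof. destruct a; unfold Cnorm2, C0; simpl; intros H; f_equal; nra. Qed.

Lemma Cnorm2_sub_self a : Cnorm2 (Cadd a (Copp a)) = 0.
Proof. destruct a; unfold Cnorm2, Cadd, Copp; simpl; ring. Qed.

Lemma Cnorm2_gt0 a : a <> C0 -> 0 < Cnorm2 a.
Proof.
  intros Ha. destruct (Rle_lt_or_eq_dec _ _ (Cnorm2_ge0 a)) as [|E]; [assumption|].
  symmetry in E. apply Cnorm2_eq0 in E. contradiction.
Qed.

Lemma Cnorm2_sub_gt0 a b : a <> b -> 0 < Cnorm2 (Cadd a (Copp b)).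
Proof.
  intros Hab. apply Cnorm2_gt0. intros E. apply Hab.
  destruct a, b; unfold Cadd, Copp, C0 in E; injection E; intros; f_equal; lra.
Qed.

Lemma Cx_eq_dec (z w : Cx) : {z = w} + {z <> w}.
Proof. decide equality; apply Req_EM_T. Qed.

Fixpoint prodN (n : nat) (g : nat -> R) : R :=
  match n with O => 1 | S m => g O * prodN m (fun k => g (S k)) end.

Lemma prodN_eq0 n g k : (k < n)%nat -> g k = 0 -> prodN n g = 0.
Proof.
  revert g k; induction n as [|n IH]; intros g k Hk Hg; simpl; [lia|].
  destruct k as [|k]; [rewrite Hg; ring|].
  rewrite (IH (fun k => g (S k)) k) by (auto; lia). ring.
Qed.

Lemma prodN_gt0 n g : (forall k, (k < n)%nat -> 0 < g k) -> 0 < prodN n g.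
Proof.
  revert g; induction n as [|n IH]; intros g Hg; simpl; [lra|].
  apply Rmult_lt_0_compat; [apply Hg; lia|apply IH; intros; apply Hg; lia].
Qed.

Lemma sumR_shift n f : sumR (S n) f = f O + sumR n (fun i => f (S i)).
Proof.
  induction n as [|n IH]; [simpl; ring|].
  change (sumR (S (S n)) f) with (sumR (S n) f + f (S n)). rewrite IH. simpl. ring.
Qed.

Lemma ln_prodN n g : (forall k, (k < n)%nat -> 0 < g k) ->
  ln (prodN n g) = sumR n (fun k => ln (g k)).
Proof.
  revert g; induction n as [|n IH]; intros g Hg; simpl prodN; [apply ln_1|].
  rewrite ln_mult, IH, sumR_shift; auto; [intros; apply Hg; lia|apply Hg; lia|].
  apply prodN_gt0; intros; apply Hg; lia.
Qed.

Lemma length_padd p q : length (padd p q) = Nat.max (length p) (length q).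
Proof. revert q; induction p as [|a p IH]; intros [|b q]; simpl; rewrite ?IH; lia. Qed.

Lemma length_poly_of_roots l : length (poly_of_roots l) = S (length l).
Proof.
  induction l as [|z l IH]; [reflexivity|].
  change (poly_of_roots (z :: l)) with (mul_lin z (poly_of_roots l)).
  unfold mul_lin. rewrite length_padd, length_map. simpl. rewrite IH. lia.
Qed.

Lemma pdeg_poly_of_roots l : pdeg (poly_of_roots l) = length l.
Proof. unfold pdeg. rewrite length_poly_of_roots. reflexivity. Qed.

Lemma Cnorm2_peval_poly_of_roots l x : Cnorm2 (peval (poly_of_roots l) x) =
  prodN (length l) (fun k => Cnorm2 (Cadd x (Copp (nth k l C0)))).
Proof.
  induction l as [|z l IH]; [simpl; unfold Cnorm2; simpl; ring|].
  change (poly_of_roots (z :: l)) with (mul_lin z (poly_of_roots l)).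
  rewrite peval_mul_lin, Cnorm2_mul, IH. reflexivity.
Qed.

Lemma peval_poly_of_roots_nth l i : (i < length l)%nat ->
  peval (poly_of_roots l) (nth i l C0) = C0.
Proof.
  intros Hi. apply Cnorm2_eq0. rewrite Cnorm2_peval_poly_of_roots.
  apply (prodN_eq0 _ _ i Hi), Cnorm2_sub_self.
Qed.

Lemma Cnorm2_pderiv_poly_of_roots l i : (i < length l)%nat ->
  Cnorm2 (peval (pderiv (poly_of_roots l)) (nth i l C0)) =
  prodN (length l) (fun k =>
    if Nat.eqb k i then 1 else Cnorm2 (Cadd (nth i l C0) (Copp (nth k l C0)))).
Proof.
  revert i; induction l as [|z l IH]; intros i Hi; simpl length in *; [lia|].
  change (poly_of_roots (z :: l)) with (mul_lin z (poly_of_roots l)).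
  rewrite peval_pderiv_mul_lin. destruct i as [|i]; simpl nth; simpl prodN.
  - rewrite Rmult_1_l, <- Cnorm2_peval_poly_of_roots.
    f_equal. cx_ring.
  - rewrite peval_poly_of_roots_nth by lia.
    match goal with |- context [Cadd C0 ?m] => replace (Cadd C0 m) with m by cx_ring end.
    rewrite Cnorm2_mul, IH by lia. reflexivity.
Qed.

Lemma NoDup_of_simple_roots l :
  (forall z, peval (poly_of_roots l) z = C0 -> peval (pderiv (poly_of_roots l)) z <> C0) ->
  NoDup l.
Proof.
  intros Hsimple. apply (NoDup_nth l C0). intros i j Hi Hj Eij.
  destruct (Nat.eq_dec i j) as [|Hij]; [assumption|exfalso].
  apply (Hsimple (nth i l C0)); [now apply peval_poly_of_roots_nth|].
  apply Cnorm2_eq0. rewrite Cnorm2_pderiv_poly_of_roots by assumption.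
  apply (prodN_eq0 _ _ j Hj). rewrite Eij, Cnorm2_sub_self.
  destruct (Nat.eqb_spec j i); [lia|reflexivity].
Qed.

Lemma sumR_ext n f g : (forall k, (k < n)%nat -> f k = g k) -> sumR n f = sumR n g.
Proof.
  induction n as [|n IH]; intros H; simpl; [reflexivity|].
  rewrite IH, H; [reflexivity|lia|intros; apply H; lia].
Qed.

Lemma sumR_le n f g : (forall k, (k < n)%nat -> f k <= g k) -> sumR n f <= sumR n g.
Proof.
  induction n as [|n IH]; intros H; simpl; [lra|].
  apply Rplus_le_compat; [apply IH; intros; apply H|apply H]; lia.
Qed.

Lemma sumR_const n c : sumR n (fun _ => c) = INR n * c.
Proof. induction n as [|n IH]; simpl sumR; [simpl; ring|rewrite IH, S_INR; ring]. Qed.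

Lemma sumR_plus n f g : sumR n (fun k => f k + g k) = sumR n f + sumR n g.
Proof. induction n as [|n IH]; simpl; [ring|rewrite IH; ring]. Qed.

Lemma sumR_scal n c f : sumR n (fun k => c * f k) = c * sumR n f.
Proof. induction n as [|n IH]; simpl; [ring|rewrite IH; ring]. Qed.

Lemma sumR_offdiag n i f : (i < n)%nat ->
  sumR n (fun j => if Nat.eqb i j then 0 else f j) = sumR n f - f i.
Proof.
  assert (H : forall m, sumR m (fun j => if Nat.eqb i j then 0 else f j) =
                        sumR m f - (if Nat.ltb i m then f i else 0)).
  { induction m as [|m IH]; simpl sumR; [simpl; ring|rewrite IH].
    destruct (Nat.eqb_spec i m), (Nat.ltb_spec i m), (Nat.ltb_spec i (S m));
      subst; try lia; ring. }
  intros Hi. rewrite H. destruct (Nat.ltb_spec i n); [ring|lia].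
Qed.

Lemma ln_sqrt x : 0 < x -> ln (sqrt x) = / 2 * ln x.
Proof.
  intros Hx. rewrite <- (sqrt_sqrt x) at 2 by lra.
  rewrite ln_mult by (apply sqrt_lt_R0; lra). field.
Qed.

Lemma ln_le x y : 0 < x -> x <= y -> ln x <= ln y.
Proof. intros Hx [H|H]; [left; apply ln_increasing|subst]; lra. Qed.

Lemma exp_le x y : x <= y -> exp x <= exp y.
Proof. intros [H|H]; [left; apply exp_increasing|subst]; lra. Qed.

Definition inv_stereo (z : Cx) : R3 :=
  ((2 * fst z / (1 + Cnorm2 z), 2 * snd z / (1 + Cnorm2 z)),
   (Cnorm2 z - 1) / (1 + Cnorm2 z)).

Lemma inv_stereo_on_sphere z : on_sphere (inv_stereo z).
Proof. destruct z as [u v]. unfold on_sphere, inv_stereo, Cnorm2; simpl. field. nra. Qed.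

Lemma dist3_inv_stereo z w : dist3 (inv_stereo z) (inv_stereo w) =
  sqrt (4 * Cnorm2 (Cadd z (Copp w)) / ((1 + Cnorm2 z) * (1 + Cnorm2 w))).
Proof.
  destruct z as [u v], w as [u' v']. unfold dist3, inv_stereo, Cnorm2, Cadd, Copp; simpl.
  f_equal. field. split; nra.
Qed.

Lemma ln_dist3_inv_stereo z w : z <> w ->
  ln (dist3 (inv_stereo z) (inv_stereo w)) =
  ln 2 + / 2 * ln (Cnorm2 (Cadd z (Copp w)))
  - / 2 * ln (1 + Cnorm2 z) - / 2 * ln (1 + Cnorm2 w).
Proof.
  intros Hzw. pose proof (Cnorm2_sub_gt0 z w Hzw) as Hc.
  pose proof (Cnorm2_ge0 z). pose proof (Cnorm2_ge0 w).
  rewrite dist3_inv_stereo, ln_sqrt by (apply Rdiv_lt_0_compat; nra).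
  unfold Rdiv. rewrite ln_mult, ln_Rinv, !ln_mult by (try apply Rinv_0_lt_compat; nra).
  replace 4 with (2 * 2) by ring. rewrite ln_mult by lra. field.
Qed.

Lemma inv_stereo_inj : Injective inv_stereo.
Proof.
  intros z w E. destruct (Cx_eq_dec z w) as [|Hzw]; [assumption|exfalso].
  assert (Hd : dist3 (inv_stereo z) (inv_stereo w) = 0).
  { rewrite E. destruct (inv_stereo w) as [[a b] c]. unfold dist3.
    replace ((a - a) ^ 2 + (b - b) ^ 2 + (c - c) ^ 2) with 0 by ring. apply sqrt_0. }
  pose proof (Cnorm2_sub_gt0 z w Hzw). pose proof (Cnorm2_ge0 z). pose proof (Cnorm2_ge0 w).
  enough (0 < dist3 (inv_stereo z) (inv_stereo w)) by lra.
  rewrite dist3_inv_stereo. apply sqrt_lt_R0, Rdiv_lt_0_compat; nra.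
Qed.

Lemma sphere_config_inv_stereo l : NoDup l -> sphere_config (length l) (map inv_stereo l).
Proof.
  intros Hl. split; [apply length_map|split].
  - apply Injective_map_NoDup; [apply inv_stereo_inj|assumption].
  - apply Forall_forall. intros x Hx. apply in_map_iff in Hx as [z [<- _]].
    apply inv_stereo_on_sphere.
Qed.

Lemma nth_map_inv_stereo l j : (j < length l)%nat ->
  nth j (map inv_stereo l) R3_0 = inv_stereo (nth j l C0).
Proof.
  intros Hj. rewrite nth_indep with (d' := inv_stereo C0) by (rewrite length_map; lia).
  apply map_nth.
Qed.

Lemma NoDup_nth_neq (l : list Cx) i j : NoDup l -> (i < length l)%nat -> (j < length l)%nat ->
  i <> j -> nth i l C0 <> nth j l C0.
Proof. intros Hl Hi Hj Hij E. apply Hij. exact (proj1 (NoDup_nth l C0) Hl i j Hi Hj E). Qed.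

(* Junk value: the subtracted diagonal term is [ln 0]; it cancels in every use. *)
Lemma ln_Cnorm2_pderiv_poly_of_roots l i : NoDup l -> (i < length l)%nat ->
  ln (Cnorm2 (peval (pderiv (poly_of_roots l)) (nth i l C0))) =
  sumR (length l) (fun k => ln (Cnorm2 (Cadd (nth i l C0) (Copp (nth k l C0)))))
  - ln (Cnorm2 (Cadd (nth i l C0) (Copp (nth i l C0)))).
Proof.
  intros Hl Hi. rewrite Cnorm2_pderiv_poly_of_roots by assumption. rewrite ln_prodN.
  2:{ intros k Hk. destruct (Nat.eqb_spec k i); [lra|].
      apply Cnorm2_sub_gt0, NoDup_nth_neq; auto. }
  rewrite <- (sumR_offdiag _ i (fun k => ln (Cnorm2 (Cadd (nth i l C0) (Copp (nth k l C0))))))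
    by assumption.
  apply sumR_ext. intros k _.
  destruct (Nat.eqb_spec k i), (Nat.eqb_spec i k); try lia; [apply ln_1|reflexivity].
Qed.

Lemma log_energy_row_inv_stereo l i : NoDup l -> (i < length l)%nat ->
  sumR (length l) (fun j => if Nat.eqb i j then 0
    else - ln (dist3 (nth i (map inv_stereo l) R3_0) (nth j (map inv_stereo l) R3_0)))
  = - (INR (length l) - 1) * ln 2
    - / 2 * ln (Cnorm2 (peval (pderiv (poly_of_roots l)) (nth i l C0)))
    + (INR (length l) / 2 - 1) * ln (1 + Cnorm2 (nth i l C0))
    + / 2 * sumR (length l) (fun j => ln (1 + Cnorm2 (nth j l C0))).
Proof.
  intros Hl Hi. rewrite ln_Cnorm2_pderiv_poly_of_roots by assumption.
  set (n := length l) in *. set (z := fun j => nth j l C0).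
  set (c := fun j => ln (Cnorm2 (Cadd (z i) (Copp (z j))))).
  set (a := fun j => ln (1 + Cnorm2 (z j))).
  rewrite (sumR_ext n _ (fun j => if Nat.eqb i j then 0
     else (- ln 2 + / 2 * a i) + (- / 2 * c j + / 2 * a j))).
  2:{ intros j Hj. destruct (Nat.eqb_spec i j) as [|Hij]; [reflexivity|].
      rewrite !nth_map_inv_stereo, ln_dist3_inv_stereo by (try apply NoDup_nth_neq; auto).
      unfold a, c, z. ring. }
  rewrite sumR_offdiag, !sumR_plus, !sumR_scal, !sumR_const by assumption.
  unfold c, a, z. field.
Qed.

Lemma ln_bound_of_mu_norm_at P z C : 0 < C -> (0 < pdeg P)%nat -> 0 < bw_norm P ->
  0 < Cnorm2 (peval (pderiv P) z) ->
  mu_norm_at P z <= C * sqrt (INR (pdeg P)) ->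
  ln (bw_norm P) + (INR (pdeg P) / 2 - 1) * ln (1 + Cnorm2 z)
  <= ln C + / 2 * ln (Cnorm2 (peval (pderiv P) z)).
Proof.
  unfold mu_norm_at, Cmod. intros HC Hdeg HB HQ Hmu.
  set (Q := Cnorm2 (peval (pderiv P) z)) in *.
  set (W := Rpower (1 + Cnorm2 z) (INR (pdeg P) / 2 - 1)) in *.
  assert (HW : 0 < W) by apply exp_pos.
  assert (HN : 0 < sqrt (INR (pdeg P))) by (apply sqrt_lt_R0, lt_0_INR; lia).
  assert (HsQ : 0 < sqrt Q) by (apply sqrt_lt_R0; lra).
  assert (Hle : bw_norm P * W <= C * sqrt Q).
  { apply (Rmult_le_reg_l (sqrt (INR (pdeg P)) / sqrt Q)); [apply Rdiv_lt_0_compat; lra|].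
    replace (sqrt (INR (pdeg P)) / sqrt Q * (C * sqrt Q)) with (C * sqrt (INR (pdeg P)))
      by (field; lra).
    replace (sqrt (INR (pdeg P)) / sqrt Q * (bw_norm P * W))
      with (sqrt (INR (pdeg P)) * bw_norm P * W / sqrt Q) by (field; lra).
    assumption. }
  apply ln_le in Hle; [|apply Rmult_lt_0_compat; assumption].
  rewrite !ln_mult, ln_sqrt in Hle by assumption.
  unfold W in Hle. rewrite ln_Rpower in Hle. lra.
Qed.

Lemma log_energy_inv_stereo_roots_le l C : 0 < C -> (0 < length l)%nat ->
  0 < bw_norm (poly_of_roots l) ->
  mu_norm_le (poly_of_roots l) (C * sqrt (INR (length l))) ->
  log_energy (map inv_stereo l) <= INR (length l) *
    (- (INR (length l) - 1) * ln 2 + ln C - ln (bw_norm (poly_of_roots l))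
     + / 2 * sumR (length l) (fun j => ln (1 + Cnorm2 (nth j l C0)))).
Proof.
  intros HC Hn HB Hmu.
  assert (Hl : NoDup l) by (apply NoDup_of_simple_roots; intros z Hz; apply Hmu, Hz).
  unfold log_energy. rewrite length_map, <- sumR_const. apply sumR_le. intros i Hi.
  rewrite log_energy_row_inv_stereo by assumption.
  destruct (Hmu (nth i l C0)) as [Hsimple Hbound]; [now apply peval_poly_of_roots_nth|].
  pose proof (ln_bound_of_mu_norm_at (poly_of_roots l) (nth i l C0) C) as Hln.
  rewrite pdeg_poly_of_roots in Hln.
  assert (HQ : 0 < Cnorm2 (peval (pderiv (poly_of_roots l)) (nth i l C0)))
    by now apply Cnorm2_gt0.
  specialize (Hln HC Hn HB HQ Hbound). lra.
Qed.

Lemma bw_norm_lin_poly z : bw_norm (lin_poly z) = sqrt (1 + Cnorm2 z).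
Proof.
  unfold bw_norm, lin_poly, pdeg; simpl. unfold Binomial.C; simpl. f_equal.
  destruct z; unfold Cnorm2, Copp, C1; simpl. field.
Qed.

Lemma prodR_bw_norm_lin_poly l :
  prodR (map (fun z => bw_norm (lin_poly z)) l) =
  exp (/ 2 * sumR (length l) (fun j => ln (1 + Cnorm2 (nth j l C0)))).
Proof.
  induction l as [|z l IH]; [simpl; rewrite Rmult_0_r, exp_0; reflexivity|].
  change (prodR (map (fun z => bw_norm (lin_poly z)) (z :: l)))
    with (bw_norm (lin_poly z) * prodR (map (fun z => bw_norm (lin_poly z)) l)).
  pose proof (Cnorm2_ge0 z).
  rewrite IH, bw_norm_lin_poly, <- (exp_ln (sqrt _)), <- exp_plus
    by (apply sqrt_lt_R0; lra).
  simpl length. rewrite sumR_shift, ln_sqrt by lra. cbn [nth]. f_equal. ring.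
Qed.

Lemma sqrt_exp_div x : 0 < x -> sqrt (exp x / x) = exp (/ 2 * (x - ln x)).
Proof.
  intros Hx. rewrite <- (exp_ln (exp x / x)) by (apply Rdiv_lt_0_compat; [apply exp_pos|lra]).
  rewrite <- (sqrt_square (exp (/ 2 * (x - ln x)))) by (left; apply exp_pos).
  f_equal. rewrite <- exp_plus. unfold Rdiv. rewrite ln_mult, ln_exp, ln_Rinv
    by (try apply Rinv_0_lt_compat; try apply exp_pos; lra).
  f_equal. field.
Qed.

Lemma exp_half_ge_of_energy_bound (Clog eps C : R) (n : nat) (B S : R) :
  0 < C -> (0 < n)%nat -> 0 < B ->
  energy_main Clog n - eps * INR n
    <= INR n * (- (INR n - 1) * ln 2 + ln C - ln B + / 2 * S) ->
  exp (/ 2 * S) >= exp (Clog - eps) / (2 * C) * sqrt (exp (INR n) / INR n) * B.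
Proof.
  intros HC Hn HB Hbound. apply lt_0_INR in Hn.
  unfold energy_main, kappa in Hbound. rewrite sqrt_exp_div by assumption.
  set (x := INR n) in *.
  assert (Hper_point : Clog - eps + x / 2 - x * ln 2 - / 2 * ln x
                 <= - (x - 1) * ln 2 + ln C - ln B + / 2 * S).
  { apply (Rmult_le_reg_l x); [assumption|]. unfold Rdiv in *.
    replace (x * (Clog - eps + x * / 2 - x * ln 2 - / 2 * ln x))
      with ((1 * / 2 - ln 2) * x ^ 2 - 1 * / 2 * x * ln x + Clog * x - eps * x) by ring.
    lra. }
  replace (exp (Clog - eps) / (2 * C) * exp (/ 2 * (x - ln x)) * B)
    with (exp ((Clog - eps) + - ln (2 * C) + / 2 * (x - ln x) + ln B)).
  2:{ rewrite !exp_plus, exp_Ropp, !exp_ln by lra. field. lra. }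
  apply Rle_ge, exp_le. rewrite ln_mult by lra. lra.
Qed.

Theorem theorem4p5 (Clog : R) (HClog : is_Clog Clog)
  (C : R) (HC : C > 0) (zs : nat -> list Cx)
  (Hlen : forall N : nat, length (zs N) = N)
  (Hmu : forall N : nat, mu_norm_le (poly_of_roots (zs N)) (C * sqrt (INR N))) :
  forall eps : R, eps > 0 -> exists N0 : nat, forall N : nat, (N >= N0)%nat ->
    prodR (map (fun z => bw_norm (lin_poly z)) (zs N))
    >= exp (Clog - eps) / (2 * C) * sqrt (exp (INR N) / INR N)
       * bw_norm (poly_of_roots (zs N)).
Proof.
  intros eps Heps. destruct (HClog eps Heps) as [N1 HN1].
  exists (Nat.max N1 1). intros N HN.
  destruct (HN1 N ltac:(lia)) as [_ Hmin].
  specialize (Hmu N). pose proof (Hlen N) as Hn.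
  set (l := zs N) in *. rewrite <- Hn in Hmu, Hmin |- *.
  rewrite prodR_bw_norm_lin_poly.
  destruct (Rle_lt_or_eq_dec 0 (bw_norm (poly_of_roots l))) as [HB|HB]; [apply sqrt_pos| |].
  2:{ rewrite <- HB, Rmult_0_r. left; apply exp_pos. }
  assert (Hl : NoDup l) by (apply NoDup_of_simple_roots; intros z Hz; apply Hmu, Hz).
  apply exp_half_ge_of_energy_bound; [lra|lia|assumption|].
  eapply Rle_trans; [apply Rge_le, Hmin, sphere_config_inv_stereo, Hl|].
  apply log_energy_inv_stereo_roots_le; [lra|lia|assumption..].
Qed.
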